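(* Let $\bar x$ be a sparsest solution of problem (P), and let $\tilde X$ be an optimal solution of the QBP program for some $\lambda\ge0$. Suppose that: - $\operatorname{rank}(\tilde X)=1$; - $\|\tilde X\|_0<\tfrac12\left(1+\tfrac{1}{\mu(\mathbf{B})}\right)$, with the convention $1/0=\infty$. Then $\tilde X=\begin{bmatrix}1\\ \bar x\end{bmatrix}\begin{bmatrix}1 & \bar x^H\end{bmatrix}$.
   Context: Fix integers $n,N\ge 1$ and data $a_i\in\mathbb{C}$, $b_i,c_i\in\mathbb{C}^n$, $Q_i\in\mathbb{C}^{n\times n}$, $y_i\in\mathbb{C}$ for $i=1,\dots,N$. Problem (P) is $$\min_{x\in\mathbb{C}^n}\|x\|_0\quad\text{subject to}\quad y_i=a_i+b_i^H x+x^H c_i+x^H Q_i x,\quad i=1,\dots,N.$$ Here $\|\cdot\|_0$ counts nonzero entries of a vector or matrix, and ${}^H$ denotes conjugate transpose. Let $\Phi_i=\begin{bmatrix} a_i & b_i^H\\ c_i & Q_i\end{bmatrix}\in\mathbb{C}^{(n+1)\times(n+1)}$. Define the linear operator $B:\mathbb{C}^{(n+1)\times(n+1)}\to\mathbb{C}^N$ by $B(X)=(\operatorname{tr}(\Phi_i X))_{i=1}^N$. The QBP program with parameter $\lambda\ge0$ is $$\min_{X}\ \operatorname{tr}(X)+\lambda\|X\|_1\quad\text{subject to}\quad y_i=\operatorname{tr}(\Phi_i X)\ (i=1,\dots,N),\quad X_{1,1}=1,\quad X\succeq0,$$ where $X$ ranges over Hermitian $(n+1)\times(n+1)$ matrices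 and $\|X\|_1$ is the sum of absolute values of the entries. Let $\mathbf{B}\in\mathbb{C}^{N\times(n+1)^2}$ be the matrix satisfying $B(X)=\mathbf{B}\,\mathrm{vec}(X)$ for all $X$, where $\mathrm{vec}(X)$ is the vectorization of $X$ (stacking its entries into a vector). Assume every column of $\mathbf{B}$ is nonzero. For a matrix $A$ with nonzero columns $A_{:,1},\dots,A_{:,m}$, the mutual coherence is $\mu(A)=\max_{i\ne j}\frac{|A_{:,i}^H A_{:,j}|}{\|A_{:,i}\|\,\|A_{:,j}\|}$, with Euclidean norms. *)

(* The complex field is modelled by an arbitrary
   numClosedFieldType C (C = ℂ is an instance). *)
From HB Require Import structures.
From mathcomp Require Import all_boot all_order all_algebra.
Set Implicit Arguments. Unset Strict Implicit. Unset Printing Implicit Defensive.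
Import Order.TTheory GRing.Theory Num.Theory.
Local Open Scope ring_scope.

Section Defs.
Variable C : numClosedFieldType.

Definition adjmx (m p : nat) (A : 'M[C]_(m, p)) : 'M[C]_(p, m) :=
  (map_mx Num.conj A)^T.

Definition nnz (m p : nat) (A : 'M[C]_(m, p)) : nat :=
  #|[set ij : 'I_m * 'I_p | A ij.1 ij.2 != 0]|.

Definition l1norm (m p : nat) (A : 'M[C]_(m, p)) : C :=
  \sum_(i < m) \sum_(j < p) `|A i j|.

Definition psd (m : nat) (A : 'M[C]_m) : Prop :=
  forall v : 'cV[C]_m, 0 <= (adjmx v *m A *m v) 0 0.

Definition hermitian (m : nat) (A : 'M[C]_m) : Prop := adjmx A = A.

Definition enorm (m : nat) (v : 'cV[C]_m) : C :=
  sqrtC (\sum_(k < m) `|v k 0| ^+ 2).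

(* mutual coherence of a matrix (max over pairs of distinct columns;
   0 if there are fewer than two columns) *)
Definition coherence (m p : nat) (A : 'M[C]_(m, p)) : C :=
  \big[Num.max/0]_(i < p) \big[Num.max/0]_(j < p | j != i)
     (`|(adjmx (col i A) *m col j A) 0 0| / (enorm (col i A) * enorm (col j A))).

Variables (n N : nat).
Variables (a : 'I_N -> C) (b c : 'I_N -> 'cV[C]_n) (Q : 'I_N -> 'M[C]_n)
          (y : 'I_N -> C).

Definition Phi (i : 'I_N) : 'M[C]_(1 + n) :=
  block_mx (a i)%:M (adjmx (b i)) (c i) (Q i).

Definition P_feasible (x : 'cV[C]_n) : Prop :=
  forall i, y i = a i + (adjmx (b i) *m x) 0 0 + (adjmx x *m c i) 0 0
                  + (adjmx x *m Q i *m x) 0 0.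

Definition sparsest (xb : 'cV[C]_n) : Prop :=
  P_feasible xb /\ forall x, P_feasible x -> (nnz xb <= nnz x)%N.

Definition Bop (X : 'M[C]_(1 + n)) : 'I_N -> C := fun i => \tr (Phi i *m X).

(* matrix of B w.r.t. vec = mxvec: tr(Phi X) = mxvec(Phi^T) . mxvec(X) *)
Definition Bmat : 'M[C]_(N, (1 + n) * (1 + n)) :=
  \matrix_(i, l) mxvec (Phi i)^T 0 l.

Definition QBP_feasible (X : 'M[C]_(1 + n)) : Prop :=
  [/\ hermitian X, forall i, y i = Bop X i, X 0 0 = 1 & psd X].

Definition QBP_obj (lam : C) (X : 'M[C]_(1 + n)) : C := \tr X + lam * l1norm X.

Definition QBP_optimal (lam : C) (X : 'M[C]_(1 + n)) : Prop :=
  QBP_feasible X /\ forall X', QBP_feasible X' -> QBP_obj lam X <= QBP_obj lam X'.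

End Defs.

(* Let X~ be feasible for QBP with rank X~ = 1.  A Hermitian rank-one matrix
   with X~_00 = 1 is a lifted point [1; x][1; x]^H, and its QBP constraints
   say exactly that x is feasible for (P).  Hence a sparsest solution xb of
   (P) satisfies |xb|_0 <= |x|_0, so the lift of xb has at most |X~|_0
   nonzero entries, and D = X~ - lift xb lies in the kernel of B with
   |D|_0 <= 2 |X~|_0 < 1 + 1/mu(B).  The Donoho-Elad coherence bound says
   that a nonzero kernel vector of a matrix with nonzero columns has at
   least 1 + 1/mu nonzero entries, so D = 0. *)
From Pilot Require Import Defs.
From HB Require Import structures.
From mathcomp Require Import all_boot all_order all_algebra.
From mathcomp Require Import ring.
Import Order.TTheory GRing.Theory Num.Theory.
Local Open Scope ring_scope.
Set Implicit Arguments. Unset Strict Implicit. Unset Printing Implicit Defensive.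

Lemma bigmax_nonneg (R : numDomainType) (I : finType) (P : pred I) (F : I -> R) :
  (forall i, P i -> 0 <= F i) ->
  0 <= \big[Num.max/0]_(i | P i) F i /\
  forall i, P i -> F i <= \big[Num.max/0]_(i | P i) F i.
Proof.
move=> F_ge0.
suff seq_case (r : seq I) : 0 <= \big[Num.max/0]_(i <- r | P i) F i /\
    forall i, i \in r -> P i -> F i <= \big[Num.max/0]_(i <- r | P i) F i.
  by case: (seq_case (index_enum I)) => ge0 ub; split=> // i; apply: ub; rewrite mem_index_enum.
elim: r => [|j r [IH_ge0 IH_ub]]; first by rewrite big_nil.
rewrite big_cons; case: ifP => Pj; last first.
  by split=> // i; rewrite inE => /orP[/eqP -> | ir]; [rewrite Pj | exact: IH_ub].
have cmp : (F j >=< \big[Num.max/0]_(i <- r | P i) F i)%O.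
  by apply: real_comparable; apply: ger0_real; [apply: F_ge0 | ].
split; first by rewrite comparable_le_max // IH_ge0 orbT.
move=> i; rewrite inE comparable_le_max // => /orP[/eqP -> _ | ir Pi].
  by rewrite lexx.
by rewrite IH_ub ?orbT.
Qed.

Section Coherence.
Variable C : numClosedFieldType.

Lemma enorm_ge0 m (v : 'cV[C]_m) : 0 <= enorm v.
Proof. by rewrite sqrtC_ge0 sumr_ge0 // => k _; rewrite exprn_ge0. Qed.

Lemma enorm_sq m (v : 'cV[C]_m) : enorm v ^+ 2 = (adjmx v *m v) 0 0.
Proof.
by rewrite /enorm sqrtCK !mxE; apply: eq_bigr => k _; rewrite !mxE normCK mulrC.
Qed.

Lemma enorm_gt0 m (v : 'cV[C]_m) : v != 0 -> 0 < enorm v.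
Proof.
move=> v_neq0; rewrite lt_def enorm_ge0 andbT; apply: contra v_neq0 => /eqP v0.
have /psumr_eq0P sq0 : \sum_(k < m) `|v k 0| ^+ 2 = 0.
  by rewrite -[LHS]sqrtCK -/(enorm v) v0 expr0n.
apply/eqP/matrixP => i j; rewrite (ord1 j) mxE.
have /eqP := sq0 (fun k _ => exprn_ge0 2 (normr_ge0 (v k 0))) i isT.
by rewrite expf_eq0 normr_eq0 => /eqP.
Qed.

Definition corr m p (A : 'M[C]_(m, p)) (i j : 'I_p) : C :=
  `|(adjmx (col i A) *m col j A) 0 0| / (enorm (col i A) * enorm (col j A)).

Lemma corr_ge0 m p (A : 'M[C]_(m, p)) i j : 0 <= corr A i j.
Proof. by rewrite divr_ge0 // mulr_ge0 // enorm_ge0. Qed.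

Lemma coherence_corr m p (A : 'M[C]_(m, p)) :
  coherence A = \big[Num.max/0]_i \big[Num.max/0]_(j | j != i) corr A i j.
Proof. by []. Qed.

Lemma coherence_ge0 m p (A : 'M[C]_(m, p)) : 0 <= coherence A.
Proof.
rewrite coherence_corr; apply: (bigmax_nonneg _).1 => i _.
by apply: (bigmax_nonneg _).1 => j _; apply: corr_ge0.
Qed.

Lemma col_inner_le_coherence m p (A : 'M[C]_(m, p)) k l :
  col k A != 0 -> col l A != 0 -> l != k ->
  `|(adjmx (col k A) *m col l A) 0 0| <= coherence A * (enorm (col k A) * enorm (col l A)).
Proof.
move=> Ak_neq0 Al_neq0 lk.
rewrite -ler_pdivrMr ?mulr_gt0 ?enorm_gt0 // -/(corr A k l) coherence_corr.
have row_ub := (bigmax_nonneg (fun j (_ : j != k) => corr_ge0 A k j)).2 l lk.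
apply: le_trans row_ub _; apply: (bigmax_nonneg _).2 => // i _.
by apply: (bigmax_nonneg _).1 => j _; apply: corr_ge0.
Qed.
End Coherence.

Section Spark.
Variables (C : numClosedFieldType) (m p : nat) (A : 'M[C]_(m, p)) (z : 'I_p -> C).
Hypothesis A_col_neq0 : forall l, col l A != 0.
Hypothesis Az0 : forall i, \sum_l A i l * z l = 0.

Let e l := enorm (col l A).
Let w l := e l * `|z l|.

Let e_gt0 l : 0 < e l. Proof. exact: enorm_gt0. Qed.

Let w_ge0 l : 0 <= w l. Proof. by rewrite mulr_ge0 // ltW ?e_gt0. Qed.

Lemma gram_kernel k : \sum_l (adjmx (col k A) *m col l A) 0 0 * z l = 0.
Proof.
transitivity (\sum_l \sum_i (A i k)^* * (A i l * z l)).
  apply: eq_bigr => l _; rewrite !mxE mulr_suml.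
  by apply: eq_bigr => i _; rewrite !mxE mulrA.
by rewrite exchange_big big1 // => i _; rewrite -mulr_sumr Az0 mulr0.
Qed.

(* Row k of the Gram equation: |A_k|^2 |z_k| <= mu |A_k| sum_{l<>k} |A_l||z_l|. *)
Lemma weight_le_coherence k : w k <= coherence A * \sum_(l | l != k) w l.
Proof.
rewrite -(ler_pM2l (e_gt0 k)).
have diag : (adjmx (col k A) *m col k A) 0 0 * z k =
            - \sum_(l | l != k) (adjmx (col k A) *m col l A) 0 0 * z l.
  by apply/eqP; rewrite -addr_eq0; have := gram_kernel k; rewrite (bigD1 k) // => ->.
have -> : e k * w k = `|(adjmx (col k A) *m col k A) 0 0 * z k|.
  by rewrite normrM -enorm_sq ger0_norm ?exprn_ge0 ?enorm_ge0 // /w mulrA expr2.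
rewrite diag normrN; apply: le_trans (ler_norm_sum _ _ _) _.
rewrite !mulr_sumr; apply: ler_sum => l lk.
rewrite normrM /w mulrCA !mulrA ler_wpM2r //.
by rewrite -mulrA; apply: col_inner_le_coherence.
Qed.

(* Summing the row bounds over supp z gives W <= mu (|supp z| - 1) W with
   W = sum_l |A_l| |z_l| > 0. *)
Lemma kernel_support_coherence :
  (exists l, z l != 0) -> 1 <= coherence A * (#|[set l | z l != 0]|%:R - 1).
Proof.
case=> l0 zl0; set S := [set l | z l != 0]; set W := \sum_l w l.
have W_supp : \sum_(k in S) w k = W.
  rewrite /W [RHS](bigID (mem S)) /= [X in _ + X]big1 ?addr0 //.
  by move=> l; rewrite inE negbK => /eqP zl; rewrite /w zl normr0 mulr0.
have W_gt0 : 0 < W.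
  rewrite /W (bigD1 l0) //=; apply: ltr_pwDl; last exact: sumr_ge0 (fun l _ => w_ge0 l).
  by rewrite /w mulr_gt0 ?e_gt0 ?normr_gt0.
have W_le : W <= coherence A * (#|S|%:R - 1) * W.
  rewrite -{1}W_supp; apply: le_trans (ler_sum _ (fun k _ => weight_le_coherence k)) _.
  have off_diag k : \sum_(l | l != k) w l = W - w k.
    by rewrite /W [in RHS](bigD1 k) //= addrC addrK.
  under eq_bigr do rewrite off_diag.
  by rewrite -mulr_sumr sumrB W_supp sumr_const -mulrA mulrBl mul1r mulr_natl.
by rewrite -(ler_pM2r W_gt0) mul1r.
Qed.
End Spark.

Lemma mxvec_index_inj m p : injective (uncurry (@mxvec_index m p)).
Proof. by case: (curry_mxvec_bij m p) => g gK _; apply: (can_inj (g := g)) => x; apply: gK. Qed.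

Lemma sum_mxvec (R : nmodType) m p (F : 'I_(m * p) -> R) :
  \sum_l F l = \sum_i \sum_j F (mxvec_index i j).
Proof.
rewrite (reindex (uncurry (@mxvec_index m p))) /=; last first.
  by case: (curry_mxvec_bij m p) => g gK Kg; exists g => x _; [apply: gK | apply: Kg].
by rewrite pair_bigA /=; apply: eq_bigr => -[i j].
Qed.

Section MatrixSupport.
Variable C : numClosedFieldType.

Lemma nnz_mxvec m p (D : 'M[C]_(m, p)) : #|[set l | mxvec D 0 l != 0]| = nnz D.
Proof.
rewrite /nnz -(card_imset _ (@mxvec_index_inj m p)); apply: eq_card => l.
rewrite !inE; case/mxvec_indexP: l => i j; rewrite mxvecE.
apply/idP/imsetP => [Dij | [[i' j'] /=]]; first by exists (i, j); rewrite ?inE.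
by rewrite inE => Dij /(@mxvec_index_inj m p (i, j) (i', j')) [-> ->].
Qed.

Lemma nnz_subr_le m p (A B : 'M[C]_(m, p)) : (nnz (A - B) <= nnz A + nnz B)%N.
Proof.
rewrite /nnz; apply: leq_trans (leq_card_setU _ _); apply: subset_leq_card.
apply/subsetP => -[i j]; rewrite !inE /= mxE [(- B) i j]mxE; apply: contraR.
by rewrite negb_or !negbK => /andP[/eqP -> /eqP ->]; rewrite subrr.
Qed.

Lemma nnz_col m (v : 'cV[C]_m) : nnz v = #|[set i | v i 0 != 0]|.
Proof.
rewrite /nnz -[RHS](card_imset _ (f := fun i => (i, ord0 : 'I_1))); last by move=> i i' [].
apply: eq_card => -[i j]; rewrite (ord1 j) inE /=; apply/idP/imsetP.
  by move=> vi; exists i; rewrite ?inE.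
by case=> i0; rewrite inE => vi0 /(congr1 fst) /= ->.
Qed.

(* The support of v v^H is supp v x supp v. *)
Lemma nnz_outer m (v : 'cV[C]_m) : nnz (v *m adjmx v) = (nnz v ^ 2)%N.
Proof.
rewrite nnz_col /nnz expnS expn1 -cardsX; apply: eq_card => -[i j].
by rewrite !inE /= !mxE big_ord1 !mxE mulf_eq0 conjC_eq0 negb_or.
Qed.

Lemma nnz_homog n (x : 'cV[C]_n) : nnz (col_mx (1%:M : 'M[C]_1) x) = (nnz x).+1.
Proof.
rewrite !nnz_col.
have -> : [set i | col_mx (1%:M : 'M[C]_1) x i 0 != 0] =
          lshift n 0 |: (@rshift 1 n) @: [set i | x i 0 != 0].
  apply/setP => i; rewrite !inE; case: (split_ordP i) => k ->.
    by rewrite (ord1 k) col_mxEu mxE eqxx oner_eq0 eqxx.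
  rewrite col_mxEd (_ : (rshift 1 k == lshift n 0) = false) /=; last first.
    by apply/negbTE; apply/eqP => /(congr1 val).
  apply/idP/imsetP => [xk | [k']]; first by exists k; rewrite ?inE.
  by rewrite inE => xk' /rshift_inj ->.
have fresh : lshift n 0 \notin (@rshift 1 n) @: [set i | x i 0 != 0].
  by apply/imsetP => -[k _] /(congr1 val).
by rewrite cardsU1 fresh card_imset //; exact: rshift_inj.
Qed.

Definition lift n (x : 'cV[C]_n) : 'M[C]_(1 + n) :=
  col_mx 1%:M x *m adjmx (col_mx 1%:M x).

Lemma nnz_lift n (x : 'cV[C]_n) : nnz (lift x) = ((nnz x).+1 ^ 2)%N.
Proof. by rewrite /lift nnz_outer nnz_homog. Qed.
End MatrixSupport.

Lemma rank1_hermitian_outer (C : numClosedFieldType) n (X : 'M[C]_(1 + n)) :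
  \rank X = 1%N -> Defs.hermitian X -> X 0 0 = 1 ->
  X = lift (dsubmx (col 0 X)).
Proof.
move=> X_rank X_herm X00; set x := dsubmx (col 0 X).
have minors2 i j : X i j * X 0 0 = X i 0 * X 0 j.
  have := mulmx_base X; move: (col_base X) (row_base X); rewrite X_rank => u v uv.
  by rewrite -uv !mxE !big_ord1; ring.
have first_col : col_mx 1%:M x = col 0 X.
  rewrite -[RHS]vsubmxK; congr col_mx; apply/matrixP => i j.
  by rewrite !ord1 !mxE /= (_ : lshift n 0 = 0) ?X00 //; apply: val_inj.
rewrite /lift first_col; apply/matrixP => i j; rewrite !mxE big_ord1 !mxE.
have <- : X 0 j = (X j 0)^* by rewrite -{1}X_herm !mxE.
by rewrite -minors2 X00 mulr1.
Qed.

(* If mu >= 0, a support size k with 1 <= mu (k - 1) cannot be at most 2 t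
   when t < (1 + 1/mu) / 2; mu = 0 contradicts the first bound. *)
Lemma coherence_support_contra (R : numFieldType) (mu : R) (k t : nat) :
  0 <= mu -> 1 <= mu * (k%:R - 1) -> (k <= 2 * t)%N ->
  (mu == 0) || (t%:R < (1 + mu^-1) / 2) -> False.
Proof.
move=> mu_ge0 spark k_le; have mu_gt0 : 0 < mu.
  by rewrite lt_def mu_ge0 andbT; apply: contraTneq spark => ->; rewrite mul0r ler10.
rewrite gt_eqF //= => t_lt.
have k_lt : k%:R - 1 < mu^-1.
  rewrite ltrBlDr addrC; apply: le_lt_trans (_ : (2 * t)%:R < _).
    by rewrite ler_nat.
  by rewrite natrM mulrC -ltr_pdivlMr.
have : mu * (k%:R - 1) < mu * mu^-1 by rewrite ltr_pM2l.
by rewrite mulfV ?gt_eqF // => /(le_lt_trans spark); rewrite ltxx.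
Qed.

Section QuadraticLifting.
Variables (C : numClosedFieldType) (n N : nat).
Variables (a : 'I_N -> C) (b c : 'I_N -> 'cV[C]_n) (Q : 'I_N -> 'M[C]_n).

Local Notation B := (Bop a b c Q).
Local Notation Bm := (Bmat a b c Q).

Lemma Bop_lift (x : 'cV[C]_n) i :
  B (lift x) i = a i + (adjmx (b i) *m x) 0 0 + (adjmx x *m c i) 0 0
                 + (adjmx x *m Q i *m x) 0 0.
Proof.
have adj_homog : adjmx (col_mx (1%:M : 'M[C]_1) x) = row_mx 1%:M (adjmx x).
  rewrite /adjmx map_col_mx tr_col_mx; congr row_mx.
  by apply/matrixP => i' j; rewrite !ord1 !mxE /= conjC1.
rewrite /Bop /lift mulmxA mxtrace_mulC adj_homog /Phi mulmxA mul_row_block mul_row_col.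
rewrite /mxtrace big_ord1 !mul1mx !mulmx1 mulmxDl !mxE mulr1n -!addrA; congr (_ + _).
by rewrite addrCA.
Qed.

Lemma Bop_subr X Y i : B (X - Y) i = B X i - B Y i.
Proof. by rewrite /Bop mulmxBr linearB. Qed.

Lemma Bop_mxvec X i : B X i = \sum_l Bm i l * mxvec X 0 l.
Proof.
rewrite sum_mxvec /Bop /mxtrace exchange_big /=.
apply: eq_bigr => j _; rewrite mxE; apply: eq_bigr => k _.
by rewrite !mxE !mxvecE !mxE.
Qed.

(* Applying the coherence bound to vec D: a nonzero D in the kernel of B
   has at least 1 + 1/mu(Bmat) nonzero entries. *)
Lemma Bop_kernel_support (D : 'M[C]_(1 + n)) :
  (forall l, col l Bm != 0) -> (forall i, B D i = 0) -> D != 0 ->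
  1 <= coherence Bm * ((nnz D)%:R - 1).
Proof.
move=> Bm_cols D_ker D_neq0; rewrite -nnz_mxvec.
apply: kernel_support_coherence => // [i | ]; first by rewrite -Bop_mxvec.
apply/existsP; apply: contraR D_neq0 => /existsPn vecD0.
rewrite -mxvec_eq0; apply/eqP/rowP => l; rewrite mxE.
by apply/eqP; rewrite -[_ == _]negbK vecD0.
Qed.
End QuadraticLifting.

Theorem mainTheorem5 (C : numClosedFieldType) (n N : nat)
  (a : 'I_N -> C) (b c : 'I_N -> 'cV[C]_n) (Q : 'I_N -> 'M[C]_n) (y : 'I_N -> C)
  (lam : C) (xb : 'cV[C]_n) (Xt : 'M[C]_(1 + n)) :
  (forall l, col l (Bmat a b c Q) != 0) ->
  0 <= lam ->
  sparsest a b c Q y xb ->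
  QBP_optimal a b c Q y lam Xt ->
  \rank Xt = 1%N ->
  (coherence (Bmat a b c Q) == 0) ||
    ((nnz Xt)%:R < (1 + (coherence (Bmat a b c Q))^-1) / 2) ->
  Xt = col_mx (1%:M : 'M[C]_1) xb *m adjmx (col_mx (1%:M : 'M[C]_1) xb).
Proof.
move=> B_cols _ [xb_feas xb_min] [[X_herm X_constr X00 _] _] X_rank small_supp.
have X_lift := rank1_hermitian_outer X_rank X_herm X00.
set x := dsubmx (col 0 Xt) in X_lift.
have x_feas : P_feasible a b c Q y x by move=> i; rewrite X_constr X_lift Bop_lift.
have D_ker i : Bop a b c Q (Xt - lift xb) i = 0.
  by rewrite Bop_subr -X_constr Bop_lift -xb_feas subrr.
have nnz_lift_le : (nnz (lift xb) <= nnz Xt)%N.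
  by rewrite X_lift !nnz_lift leq_exp2r // ltnS xb_min.
have nnz_D : (nnz (Xt - lift xb) <= 2 * nnz Xt)%N.
  by rewrite mul2n -addnn (leq_trans (nnz_subr_le _ _)) // leq_add2l.
have [/eqP | D_neq0] := eqVneq (Xt - lift xb) 0; first by rewrite subr_eq0 => /eqP.
exfalso; apply: (coherence_support_contra (coherence_ge0 _) _ nnz_D small_supp).
exact: Bop_kernel_support B_cols D_ker D_neq0.
Qed.
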